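(* Let $\ell, m$ be positive integers and $n=(\ell+1)m$. For $1\le s\le \ell+1$ put $a_s = e_{(s-1)m+1}+\cdots+e_{sm}\in E^1$. Let $K$ be a Latin $\ell$-dimensional hypercube on $[m]$. Then in $E$ \begin{align*} \partial(a_1\wedge a_2\wedge\cdots\wedge a_{\ell+1}) &= -(a_1-a_2)\wedge \partial(a_2\wedge\cdots\wedge a_{\ell+1}) \\ &= (-1)^{\ell} m\,(a_1-a_2)\wedge(a_2-a_3)\wedge\cdots\wedge(a_\ell - a_{\ell+1}) \\ &= m\sum_{S\in\mathcal{C}[K]} \partial(e_S), \end{align*} where for $S=(i_1,\ldots,i_p)$ one writes $e_S=e_{i_1}\wedge\cdots\wedge e_{i_p}$.
   Context: $R$ is a commutative ring with $1$; $E$ is the graded exterior algebra over $R$ generated by degree-one elements $e_1,\ldots,e_n$. The $R$-linear map $\partial:E^p\to E^{p-1}$ is given by $\partial 1=0$, $\partial e_i=1$, $\partial(e_{i_1}\wedge\cdots\wedge e_{i_p})=\sum_{k=1}^p(-1)^{k-1}e_{i_1}\wedge\cdots\wedge\widehat{e_{i_k}}\wedge\cdots\wedge e_{i_p}$. A Latin $\ell$-dimensional hypercube on $[m]$ is an array $K=[k(i_1,\ldots,i_\ell)]_{1\le i_1,\ldots,i_\ell\le m}$ with entries in $[m]$ such that fixing any $\ell-1$ coordinates, the $m$ entries obtained by varying the remaining one are exactly $[m]$. $\mathcal{C}[K]$ is the family of ordered tuples $(i_1, m+i_2, 2m+i_3,\ldots,(\ell-1)m+i_\ell, \ell m+k(i_1,\ldots,i_\ell))$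 for $1\le i_1,\ldots,i_\ell\le m$. *)

(* Exterior algebra E over a commutative ring R on generators
   e_1..e_n, modelled as the free R-module with basis e_U, U a subset of
   {1..n} (represented by {set 'I_n}, generator e_i <-> ordinal i-1),
   e_U = wedge of its elements in increasing order. *)
From HB Require Import structures.
From mathcomp Require Import all_boot all_order all_algebra.
Set Implicit Arguments. Unset Strict Implicit. Unset Printing Implicit Defensive.
Import GRing.Theory.
Local Open Scope ring_scope.

Notation ext R n := {ffun {set 'I_n} -> R}.

Section Exterior.
Variables (R : comPzRingType) (n : nat).

(* sign of the shuffle of increasing sequences S then T: (-1)^(#inversions) *)
Definition ext_sgn (S T : {set 'I_n}) : R :=
  (-1) ^+ #|[set p : 'I_n * 'I_n | (p.1 \in S) && (p.2 \in T) && (p.2 < p.1)%N]|.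

Definition wedge (x y : ext R n) : ext R n :=
  [ffun U => \sum_(S : {set 'I_n}) \sum_(T : {set 'I_n} |
      (S :|: T == U) && [disjoint S & T]) ext_sgn S T * x S * y T].

Definition ext1 : ext R n := [ffun U => (U == set0)%:R].

Definition ebasis (U : {set 'I_n}) : ext R n := [ffun V => (V == U)%:R].

(* generator e_i, 1-based: e_i for 1 <= i <= n (0 outside this range) *)
Definition gen (i : nat) : ext R n :=
  match insub i.-1 with
  | Some k => if (0 < i)%N then ebasis [set k] else 0
  | None => 0
  end.

(* the boundary map: R-linear, d(e_{i_1}..e_{i_p}) = sum_k (-1)^(k-1) e_{..hat i_k..}
   (for increasing i_1<..<i_p); coefficient of e_U in d x *)
Definition del (x : ext R n) : ext R n :=
  [ffun U : {set 'I_n} => \sum_(i : 'I_n | i \notin U)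
                (-1) ^+ #|[set j in U | (j < i)%N]| * x (i |: U)].

Definition wedge_seq (s : seq (ext R n)) : ext R n := foldr wedge ext1 s.

(* e_S for an ordered tuple S = (i_1,..,i_p) of 1-based indices *)
Definition eS (S : seq nat) : ext R n := wedge_seq (map gen S).

End Exterior.

(* Latin l-dimensional hypercube on [m]; entries and coordinates 0-based
   ('I_m stands for [m] via k <-> k+1). Fixing all coordinates except j,
   the m entries obtained are exactly [m]. *)
Definition latin (l m : nat) (K : {ffun {ffun 'I_l -> 'I_m} -> 'I_m}) : Prop :=
  forall (j : 'I_l) (t : {ffun 'I_l -> 'I_m}),
    [set K [ffun k => if k == j then x else t k] | x : 'I_m] = [set: 'I_m].

(* the tuple (i_1, m+i_2, .., (l-1)m+i_l, lm + k(i_1..i_l)) in 1-based terms *)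
Definition Ctuple (l m : nat) (K : {ffun {ffun 'I_l -> 'I_m} -> 'I_m})
    (i : {ffun 'I_l -> 'I_m}) : seq nat :=
  [seq (j * m + (i j).+1)%N | j : 'I_l <- enum 'I_l] ++ [:: (l * m + (K i).+1)%N].

(* the family C[K] (listed once for each index tuple; the map is injective) *)
Definition Cfam (l m : nat) (K : {ffun {ffun 'I_l -> 'I_m} -> 'I_m}) : seq (seq nat) :=
  [seq Ctuple K i | i <- enum {ffun 'I_l -> 'I_m}].

Definition ablock (R : comPzRingType) (n m s : nat) : ext R n :=
  \sum_(j < m) gen R n ((s.-1) * m + j.+1).

Definition escale (R : comPzRingType) (n : nat) (c : R) (x : ext R n) : ext R n :=
  [ffun U => c * x U].

(* Each block a_s is a sum of m generators e_i, and every e_i satisfies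
   del (e_i /\ y) = y - e_i /\ del y and anticommutes with the other generators.
   Hence a_s /\ a_s = 0 and del (a_s /\ y) = m y - a_s /\ del y.  Applying this
   rule to a_1 /\ (a_2 /\ ...) and to a_2 /\ (...) gives the first identity, and
   iterating it gives the second.  For the third, both del (a_1 /\ ... /\ a_(l+1))
   and every del e_S expand into alternating sums over the factor k that is
   dropped.  Expanding the product of the l remaining blocks by multilinearity,
   each of its monomials is e_S with the k-th factor dropped for exactly one
   S in C[K], because a point (i_1, ..., i_l, K i) of the graph of a Latin
   hypercube is determined by any l of its l+1 coordinates. *)

From HB Require Import structures.
From mathcomp Require Import all_boot all_order all_algebra ring.
Set Implicit Arguments. Unset Strict Implicit. Unset Printing Implicit Defensive.
Import GRing.Theory.
Local Open Scope ring_scope.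

Lemma sumr_antisym_eq0 (V : zmodType) I (r : seq I) (X : I -> I -> V) :
  (forall i j, X i j = - X j i) -> (forall i, X i i = 0) ->
  \sum_(i <- r) \sum_(j <- r) X i j = 0.
Proof.
move=> XN X0; elim: r => [|x r IH]; first by rewrite big_nil.
rewrite big_cons; under eq_bigr do rewrite big_cons.
rewrite big_split /= IH addr0 big_cons X0 add0r -big_split /= big1 // => i _.
by rewrite [X x i]XN addNr.
Qed.

Section Exterior.
Variables (R : comPzRingType) (n : nat).
Local Notation E := (ext R n).

Lemma del_is_zmod : zmod_morphism (@del R n).
Proof.
move=> x y; apply/ffunP => U; rewrite !ffunE -sumrB.
by apply: eq_bigr => i _; rewrite !ffunE mulrBr.
Qed.
HB.instance Definition _ := GRing.isZmodMorphism.Build E E (@del R n) del_is_zmod.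

Lemma wedge_is_zmod (x : E) : zmod_morphism (wedge x).
Proof.
move=> y z; apply/ffunP => U; rewrite !ffunE -sumrB; apply: eq_bigr => S _.
by rewrite -sumrB; apply: eq_bigr => T _; rewrite !ffunE mulrBr.
Qed.
HB.instance Definition _ (x : E) :=
  GRing.isZmodMorphism.Build E E (wedge x) (wedge_is_zmod x).

Definition wedger (y x : E) := wedge x y.

Lemma wedger_is_zmod (y : E) : zmod_morphism (wedger y).
Proof.
move=> x z; apply/ffunP => U; rewrite !ffunE -sumrB; apply: eq_bigr => S _.
by rewrite -sumrB; apply: eq_bigr => T _; rewrite !ffunE mulrBr mulrBl.
Qed.
HB.instance Definition _ (y : E) :=
  GRing.isZmodMorphism.Build E E (wedger y) (wedger_is_zmod y).

Lemma wedge_suml I (r : seq I) (P : pred I) (F : I -> E) (y : E) :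
  wedge (\sum_(i <- r | P i) F i) y = \sum_(i <- r | P i) wedge (F i) y.
Proof. exact: (raddf_sum (wedger y)). Qed.

Lemma wedgeBl (x z y : E) : wedge (x - z) y = wedge x y - wedge z y.
Proof. exact: (raddfB (wedger y)). Qed.

Lemma del_ext1 : del (ext1 R n) = 0.
Proof.
apply/ffunP => U; rewrite !ffunE big1 // => i _.
rewrite ffunE (_ : (_ == _) = false) ?mulr0 //.
by apply/negbTE/set0Pn; exists i; rewrite setU11.
Qed.

Definition nlt (U : {set 'I_n}) (k : 'I_n) := #|[set x in U | (x < k)%N]|.

Lemma nltD1 (U : {set 'I_n}) i k : i \in U -> nlt U k = ((i < k)%N + nlt (U :\ i) k)%N.
Proof.
move=> iU; rewrite /nlt (cardsD1 i) inE iU /=; congr (_ + _)%N.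
by apply: eq_card => x; rewrite !inE andbA.
Qed.

Lemma nltU1 (U : {set 'I_n}) i k : i \notin U -> nlt (i |: U) k = ((i < k)%N + nlt U k)%N.
Proof. by move=> iU; rewrite (nltD1 k (setU11 i U)) setU1K. Qed.

(* [emul k y = e_k /\ y]: moving k into place past the smaller elements of U
   costs the sign (-1)^(nlt U k). *)
Definition emul (k : 'I_n) (y : E) : E :=
  [ffun U : {set 'I_n} => if k \in U then (-1) ^+ nlt U k * y (U :\ k) else 0].

Lemma wedge_ebasis1 (k : 'I_n) (y : E) : wedge (ebasis R [set k]) y = emul k y.
Proof.
apply/ffunP => U; rewrite !ffunE (bigD1 [set k]) //= [X in _ + X]big1 ?addr0; last first.
  by move=> S SK; rewrite big1 // => T _; rewrite ffunE (negbTE SK) mulr0 mul0r.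
rewrite ffunE eqxx; case: ifP => kU; last first.
  by rewrite big1 // => T /andP[/eqP TU _]; move: kU; rewrite -TU setU11.
rewrite (bigD1 (U :\ k)) /=; last by rewrite setD1K // eqxx disjoints1 setD11.
rewrite big1 ?addr0; last first.
  by move=> T /andP[/andP[/eqP <-]]; rewrite disjoints1 => kT; rewrite setU1K // eqxx.
rewrite mulr1; congr (_ ^+ _ * _).
have pair_inj : injective (pair k : 'I_n -> _) by move=> a b [].
rewrite /nlt -(card_imset _ pair_inj).
apply: eq_card => -[a b]; rewrite !inE /=; apply/idP/imsetP.
  by case/andP=> /andP[/eqP -> /andP[_ bU]] bk; exists b; rewrite ?inE ?bU ?bk.
case=> b'; rewrite inE => /andP[bU bk] [-> ->].
by rewrite eqxx bU bk andbT /= neq_ltn bk.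
Qed.

Lemma emul_emul (k : 'I_n) (y : E) : emul k (emul k y) = 0.
Proof. by apply/ffunP => U; rewrite !ffunE; case: ifP; rewrite ?setD11 ?mulr0. Qed.

Lemma emulC (i j : 'I_n) (y : E) : emul i (emul j y) = - emul j (emul i y).
Proof.
wlog ij : i j / (i < j)%N => [hwlog|].
  case: (ltngtP i j) => [|ji|/val_inj ->]; first exact: hwlog.
    by rewrite (hwlog j i) ?opprK.
  by rewrite emul_emul oppr0.
apply/ffunP => U; rewrite !ffunE !in_setD1 -!val_eqE /= ?(gtn_eqF ij, ltn_eqF ij) /=.
case iU: (i \in U); case jU: (j \in U); rewrite ?mulr0 ?oppr0 //.
rewrite (nltD1 j iU) (nltD1 i jU) ij ltnNge (ltnW ij) setDDl setUC -setDDl.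
by rewrite /= add0n exprS; ring.
Qed.

Lemma del_emul (k : 'I_n) (y : E) : del (emul k y) = y - emul k (del y).
Proof.
apply/ffunP => U; rewrite !ffunE; case: ifP => kU; last first.
  rewrite subr0 (bigD1 k) ?kU //= big1 ?addr0 => [|i /andP[iU ik]]; last first.
    by rewrite ffunE in_setU1 kU orbF eq_sym (negbTE ik) mulr0.
  by rewrite ffunE setU11 (nltU1 k (negbT kU)) ltnn setU1K ?kU // signrMK.
have nlt_k : nlt (U :\ k) k = nlt U k by rewrite (nltD1 k kU) ltnn.
rewrite [in RHS](bigD1 k) ?setD11 //= setD1K // -/(nlt _ k) nlt_k.
rewrite mulrDr signrMK opprD addrA subrr add0r mulr_sumr -sumrN.
rewrite [RHS](eq_bigl (fun i => i \notin U)) => [|i]; last first.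
  by rewrite !inE; case: (i =P k) => [->|_]; rewrite ?kU ?andbT.
apply: eq_bigr => i iU; have ik : i != k by apply: contraNneq iU => ->.
rewrite ffunE in_setU1 kU orbT.
have -> : (i |: U) :\ k = i |: (U :\ k).
  by apply/setP => x; rewrite !inE; case: (x =P i) => // ->; rewrite ik.
rewrite -/(nlt U i) -/(nlt _ i) (nltU1 k iU) (nltD1 i kU) !exprD.
have sign_ik : (-1) ^+ (i < k)%N * (-1) ^+ (k < i)%N = - 1 :> R.
  by rewrite -exprD; case: ltngtP ik => [||/val_inj ->]; rewrite ?eqxx ?expr1.
transitivity ((-1) ^+ (i < k)%N * (-1) ^+ (k < i)%N
             * ((-1) ^+ nlt (U :\ k) i * (-1) ^+ nlt U k * y (i |: U :\ k))).
  by ring.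
by rewrite sign_ik; ring.
Qed.

Lemma wedge_gen (i : nat) (hi : (i < n)%N) (y : E) :
  wedge (gen R n i.+1) y = emul (Ordinal hi) y.
Proof. by rewrite /gen /= insubT wedge_ebasis1. Qed.

(* For [u] of degree one, [c] plays the role of the scalar [del u]. *)
Definition del_leibniz (u : E) (c : nat) :=
  forall y : E, del (wedge u y) = y *+ c - wedge u (del y).

Definition wedge_sqr0 (u : E) := forall y : E, wedge u (wedge u y) = 0.

Definition wedge_anticomm (u v : E) :=
  forall y : E, wedge u (wedge v y) = - wedge v (wedge u y).

Lemma del_leibniz_gen (i : nat) : (i < n)%N -> del_leibniz (gen R n i.+1) 1.
Proof. by move=> hi y; rewrite !(wedge_gen hi) del_emul. Qed.

Lemma wedge_sqr0_gen (i : nat) : (i < n)%N -> wedge_sqr0 (gen R n i.+1).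
Proof. by move=> hi y; rewrite !(wedge_gen hi) emul_emul. Qed.

Lemma wedge_anticomm_gen (i j : nat) : (i < n)%N -> (j < n)%N ->
  wedge_anticomm (gen R n i.+1) (gen R n j.+1).
Proof. by move=> hi hj y; rewrite !(wedge_gen hi) !(wedge_gen hj) emulC. Qed.

Lemma del_leibniz_sum I (r : seq I) (F : I -> E) (c : I -> nat) :
  (forall i, del_leibniz (F i) (c i)) ->
  del_leibniz (\sum_(i <- r) F i) (\sum_(i <- r) c i).
Proof.
move=> HF y; rewrite !wedge_suml raddf_sum -sumrMnr -sumrB.
by apply: eq_bigr => i _; apply: HF.
Qed.

Lemma wedge_sqr0_sum I (r : seq I) (F : I -> E) :
  (forall i j, wedge_anticomm (F i) (F j)) -> (forall i, wedge_sqr0 (F i)) ->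
  wedge_sqr0 (\sum_(i <- r) F i).
Proof.
move=> HC H0 y; rewrite wedge_suml.
under eq_bigr do rewrite wedge_suml raddf_sum.
by apply: sumr_antisym_eq0 => [i j|i]; [apply: HC | apply: H0].
Qed.

Lemma escale_nat (k : nat) (x : E) : escale k%:R x = x *+ k.
Proof. by apply/ffunP => U; rewrite !ffunE ffunMnE mulr_natl. Qed.

Lemma escale_int (z : int) (x : E) : escale z%:~R x = x *~ z.
Proof. by apply/ffunP => U; rewrite !ffunE ffunMzE mulrzl. Qed.

Lemma del_wedge_pair (u w y : E) c :
  del_leibniz u c -> del_leibniz w c -> wedge_sqr0 w ->
  del (wedge u (wedge w y)) = - wedge (u - w) (del (wedge w y)).
Proof.
move=> Hu Hw Hww; rewrite Hu Hw wedgeBl !raddfB /= !raddfMn /= Hww.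
by rewrite !oppr0 addr0 !opprK addrC.
Qed.

Lemma del_wedge_seq_telescope (F : nat -> E) c s k :
  (forall t, (s <= t <= s + k)%N -> del_leibniz (F t) c) ->
  (forall t, (s < t <= s + k)%N -> wedge_sqr0 (F t)) ->
  del (wedge_seq [seq F t | t <- iota s k.+1])
  = wedge_seq [seq F t - F t.+1 | t <- iota s k] *~ ((-1) ^+ k * c%:Z).
Proof.
elim: k s => [|k IH] s HF H0.
  by rewrite /= HF ?addn0 ?leqnn // del_ext1 raddf0 subr0 mul1r pmulrn.
rewrite [iota _ _]/= [wedge_seq _]/= (@del_wedge_pair _ _ _ c); first last.
- by apply: H0; rewrite ltnSn addnS ltnS leq_addr.
- by apply: HF; rewrite leqnSn addnS ltnS leq_addr.
- by apply: HF; rewrite leqnn leq_addr.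
rewrite [wedge (F s.+1) _](_ : _ = wedge_seq [seq F t | t <- iota s.+1 k.+1]) //.
rewrite IH => [|t /andP[st tk]|t /andP[st tk]]; last 2 first.
- by apply: HF; rewrite (ltnW st) -addSnnS.
- by apply: H0; rewrite (ltnW st) -addSnnS.
by rewrite raddfMz /= exprS mulN1r mulNr mulrNz.
Qed.

Lemma del_wedge_seq p (F : 'I_p.+1 -> E) (c : 'I_p.+1 -> nat) :
  (forall k, del_leibniz (F k) (c k)) ->
  del (wedge_seq [seq F i | i <- enum 'I_p.+1])
  = \sum_(k < p.+1) (wedge_seq [seq F (lift k t) | t <- enum 'I_p] *+ c k) *~ ((-1) ^+ k).
Proof.
elim: p F c => [|p IH] F c HF.
  by rewrite enum_ordSl enum_ord0 big_ord1 /= HF del_ext1 raddf0 subr0 expr0 mulr1z.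
rewrite enum_ordSl /= -map_comp HF (IH _ (c \o lift ord0)) => [|k]; last exact: HF.
rewrite [RHS]big_ord_recl /= expr0 mulr1z raddf_sum -sumrN; congr (_ + _).
apply: eq_bigr => k _; rewrite raddfMz raddfMn /= exprS mulN1r mulrNz.
congr (- (_ *+ _ *~ _)); rewrite enum_ordSl /= -map_comp.
congr (wedge (F _) (wedge_seq _)).
  exact: val_inj.
by apply: eq_map => t; congr F; apply: val_inj; rewrite /= /bump !leq0n !add1n ltnS addnS.
Qed.

Lemma wedge_seq_bigA_distr p m (G : 'I_p -> 'I_m -> E) :
  wedge_seq [seq \sum_(j < m) G s j | s <- enum 'I_p]
  = \sum_(g : {ffun 'I_p -> 'I_m}) wedge_seq [seq G s (g s) | s <- enum 'I_p].
Proof.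
elim: p G => [|p IH] G.
  by rewrite enum_ord0 /= sumr_const card_ffun !card_ord expn0.
transitivity (\sum_(j < m) \sum_(h : {ffun 'I_p -> 'I_m})
    wedge (G ord0 j) (wedge_seq [seq G (lift ord0 s) (h s) | s <- enum 'I_p])).
  rewrite enum_ordSl /= -map_comp IH wedge_suml.
  by apply: eq_bigr => j _; rewrite raddf_sum.
rewrite pair_big /=.
pose consf (jh : 'I_m * {ffun 'I_p -> 'I_m}) : {ffun 'I_p.+1 -> 'I_m} :=
  [ffun i => if unlift ord0 i is Some i' then jh.2 i' else jh.1].
rewrite (reindex consf) /=; last first.
  exists (fun g => (g ord0, [ffun s => g (lift ord0 s)])) => [[j h] _|g _].
    by rewrite ffunE unlift_none; congr (_, _); apply/ffunP => s; rewrite !ffunE liftK.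
  by apply/ffunP => i; rewrite !ffunE; case: unliftP => [i' ->|->]; rewrite ?ffunE.
apply: eq_bigr => -[j h] _; rewrite enum_ordSl /= -map_comp ffunE unlift_none.
by congr (wedge _ (wedge_seq _)); apply: eq_map => s /=; rewrite ffunE liftK.
Qed.

End Exterior.

Section LatinHypercube.
Variables (l m : nat) (K : {ffun {ffun 'I_l -> 'I_m} -> 'I_m}).
Hypothesis HK : latin K.

Lemma latin_inj (j : 'I_l) (i1 i2 : {ffun 'I_l -> 'I_m}) :
  (forall x, x != j -> i1 x = i2 x) -> K i1 = K i2 -> i1 = i2.
Proof.
move=> i12 Ki12; set line := fun y => K [ffun k => if k == j then y else i1 k].
have /imset_injP line_inj : #|[set line y | y : 'I_m]| == #|'I_m|.
  by rewrite /line HK cardsT.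
have line_i (i : {ffun 'I_l -> 'I_m}) : (forall x, x != j -> i1 x = i x) -> line (i j) = K i.
  move=> i1i; rewrite /line; congr (K _); apply/ffunP => x; rewrite ffunE.
  by case: eqP => [-> // | /eqP /i1i].
have eq_j : i1 j = i2 j by apply: line_inj; rewrite ?inE // !line_i.
by apply/ffunP => x; case: (x =P j) => [-> // | /eqP /i12].
Qed.

Definition Kgraph (i : {ffun 'I_l -> 'I_m}) (s : 'I_l.+1) : 'I_m :=
  if insub (val s) is Some s' then i s' else K i.

Lemma Kgraph_widen i (x : 'I_l) : Kgraph i (widen_ord (leqnSn l) x) = i x.
Proof. by rewrite /Kgraph /= valK. Qed.

Lemma Kgraph_max i : Kgraph i ord_max = K i.
Proof. by rewrite /Kgraph /= insubF // ltnn. Qed.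

Lemma Kgraph_lift_inj (k : 'I_l.+1) :
  injective (fun i => [ffun t => Kgraph i (lift k t)]).
Proof.
move=> i1 i2 /ffunP eq_lift.
have eq_graph s : s != k -> Kgraph i1 s = Kgraph i2 s.
  case: (unliftP k s) => [t -> _|->]; last by rewrite eqxx.
  by have := eq_lift t; rewrite !ffunE.
have [kl | lk] := ltnP k l; last first.
  apply/ffunP => x; rewrite -!Kgraph_widen eq_graph // -val_eqE /=.
  by rewrite neq_ltn (leq_trans (ltn_ord x) lk).
apply: (@latin_inj (Ordinal kl)) => [x xk|]; last first.
  by rewrite -!Kgraph_max eq_graph // -val_eqE /= neq_ltn kl orbT.
by rewrite -!Kgraph_widen eq_graph // -val_eqE; rewrite -val_eqE in xk.
Qed.

End LatinHypercube.

Section Blocks.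
Variables (R : comPzRingType) (l m : nat).
Local Notation n := (l.+1 * m)%N.
Local Notation a := (ablock R n m).
Local Notation A := (wedge_seq [seq a s | s <- iota 1 l.+1]).

Lemma ablockE s : a s = \sum_(j < m) gen R n (s.-1 * m + j).+1.
Proof. by apply: eq_bigr => j _; rewrite addnS. Qed.

Lemma ablock_index_lt s (j : 'I_m) : (s <= l.+1)%N -> (s.-1 * m + j < n)%N.
Proof.
move=> sl; apply: (@leq_trans (s.-1 * m + m)); first by rewrite ltn_add2l.
have sl' : (s.-1 < l.+1)%N by case: s sl.
by rewrite -mulSnr leq_mul2r sl' orbT.
Qed.

Lemma del_leibniz_ablock s : (s <= l.+1)%N -> del_leibniz (a s) m.
Proof.
move=> sl; suff: del_leibniz (a s) (\sum_(j < m) 1)%N by rewrite sum1_card card_ord.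
by rewrite ablockE; apply: del_leibniz_sum => j; apply/del_leibniz_gen/ablock_index_lt.
Qed.

Lemma wedge_sqr0_ablock s : (s <= l.+1)%N -> wedge_sqr0 (a s).
Proof.
move=> sl; rewrite ablockE; apply: wedge_sqr0_sum => [i j|j].
  by apply: wedge_anticomm_gen; apply: ablock_index_lt.
by apply/wedge_sqr0_gen/ablock_index_lt.
Qed.

Lemma del_ablocks_pair : (0 < l)%N ->
  del A = - wedge (a 1%N - a 2%N) (del (wedge_seq [seq a s | s <- iota 2 l])).
Proof.
move=> l_gt0; have -> : iota 1 l.+1 = 1 :: 2 :: iota 3 l.-1 by case: (l) l_gt0.
have -> : iota 2 l = 2 :: iota 3 l.-1 by case: (l) l_gt0.
apply: (@del_wedge_pair _ _ _ _ _ m).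
- exact: del_leibniz_ablock.
- exact: del_leibniz_ablock.
- exact: wedge_sqr0_ablock.
Qed.

Lemma del_ablocks_telescope :
  del A = escale ((-1) ^+ l * m%:R) (wedge_seq [seq a s - a s.+1 | s <- iota 1 l]).
Proof.
rewrite (@del_wedge_seq_telescope _ _ _ m) => [|t /andP[_ tl]|t /andP[_ tl]].
- by rewrite -escale_int intrM intr_sign.
- exact: del_leibniz_ablock.
- exact: wedge_sqr0_ablock.
Qed.

Lemma del_ablocks_expand :
  del A = \sum_(k < l.+1)
    (wedge_seq [seq a (lift k t).+1 | t <- enum 'I_l] *+ m) *~ ((-1) ^+ k).
Proof.
have -> : [seq a s | s <- iota 1 l.+1] = [seq a (val i).+1 | i <- enum 'I_l.+1].
  by rewrite (iotaDl 1 0) -val_enum_ord -!map_comp.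
by apply: del_wedge_seq => k; apply/del_leibniz_ablock/ltn_ord.
Qed.

Variable K : {ffun {ffun 'I_l -> 'I_m} -> 'I_m}.
Hypothesis HK : latin K.

Lemma eS_Ctuple i :
  eS R n (Ctuple K i)
  = wedge_seq [seq gen R n (s * m + Kgraph K i s).+1 | s : 'I_l.+1 <- enum 'I_l.+1].
Proof.
rewrite /eS /Ctuple enum_ordSr map_rcons -cats1 !map_cat.
congr (wedge_seq (_ ++ _)); last by rewrite /= Kgraph_max addnS.
by rewrite -!map_comp; apply: eq_map => x /=; rewrite Kgraph_widen addnS.
Qed.

Lemma del_eS_Ctuple i :
  del (eS R n (Ctuple K i)) = \sum_(k < l.+1)
    wedge_seq [seq gen R n (lift k t * m + Kgraph K i (lift k t)).+1 | t <- enum 'I_l]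
      *~ ((-1) ^+ k).
Proof.
rewrite eS_Ctuple (@del_wedge_seq _ _ _ _ (fun=> 1%N)) => [|k].
  by under eq_bigr do rewrite mulr1n.
exact/del_leibniz_gen/(ablock_index_lt _ (ltn_ord k)).
Qed.

Lemma sum_Kgraph_lift (k : 'I_l.+1) :
  \sum_(i : {ffun 'I_l -> 'I_m})
    wedge_seq [seq gen R n (lift k t * m + Kgraph K i (lift k t)).+1 | t <- enum 'I_l]
  = wedge_seq [seq a (lift k t).+1 | t <- enum 'I_l].
Proof.
rewrite (eq_map (fun t => ablockE (lift k t).+1)) wedge_seq_bigA_distr.
rewrite [RHS](reindex_inj (Kgraph_lift_inj HK (k := k))); apply: eq_bigr => i _.
by congr wedge_seq; apply: eq_map => t; rewrite ffunE.
Qed.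

Lemma del_ablocks_latin : del A = escale m%:R (\sum_(S <- Cfam K) del (eS R n S)).
Proof.
rewrite del_ablocks_expand escale_nat big_map (eq_bigr _ (fun i _ => del_eS_Ctuple i)).
rewrite exchange_big -sumrMnl; apply: eq_bigr => k _.
by rewrite -mulrz_suml big_enum sum_Kgraph_lift !pmulrn -!mulrzA mulrC.
Qed.

End Blocks.

Unset Implicit Arguments.

Theorem lemma2p3 (R : comPzRingType) (l m : nat) (hl : (0 < l)%N) (hm : (0 < m)%N)
  (K : {ffun {ffun 'I_l -> 'I_m} -> 'I_m}) (HK : latin K) :
  let n := (l.+1 * m)%N in
  let a := ablock R n m in
  let A := wedge_seq [seq a s | s <- iota 1 l.+1] in
  del A = - wedge (a 1%N - a 2%N) (del (wedge_seq [seq a s | s <- iota 2 l]))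
  /\ del A = escale ((-1) ^+ l * m%:R) (wedge_seq [seq a s - a s.+1 | s <- iota 1 l])
  /\ del A = escale m%:R (\sum_(S <- Cfam K) del (eS R n S)).
Proof.
move=> n a A; split; first exact: del_ablocks_pair.
by split; [exact: del_ablocks_telescope | exact: del_ablocks_latin].
Qed.
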